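(* Let $\alpha>0$, $\beta,\eta,\kappa\in\mathbb{R}$, $\rho>0$, $p\geq 1$, and $0\le a<x$. Let $f,g$ be two positive functions on $[0,\infty)$ with $f,g\in X^{p}_{c}(a,x)$ (for some $c\in\mathbb{R}$), such that ${}^{\rho}\mathcal{I}^{\alpha,\beta}_{a+,\eta,\kappa}f^{p}(x)<\infty$ and ${}^{\rho}\mathcal{I}^{\alpha,\beta}_{a+,\eta,\kappa}g^{p}(x)<\infty$. Suppose there are real numbers $m,M>0$ with $0<m\leq \frac{f(t)}{g(t)}\leq M$ for all $t\in[a,x]$. Define, for $t\in[a,x]$, $$h(f(t),g(t))=\max\left\{M\left[\left(\frac{M}{m}+1\right)f(t)-Mg(t)\right],\ \frac{(m+M)g(t)-f(t)}{m}\right\}.$$ Then $$\left({}^{\rho}\mathcal{I}^{\alpha,\beta}_{a+,\eta,\kappa}f^{p}(x)\right)^{1/p}+\left({}^{\rho}\mathcal{I}^{\alpha,\beta}_{a+,\eta,\kappa}g^{p}(x)\right)^{1/p}\leq 2\left({}^{\rho}\mathcal{I}^{\alpha,\beta}_{a+,\eta,\kappa}h^{p}(f,g)(x)\right)^{1/p}.$$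
   Context: For $c\in\mathbb{R}$ and $1\le p<\infty$, $X^{p}_{c}(a,b)$ denotes the space of Lebesgue measurable functions $f$ on $(a,b)$ with $\left(\int_a^b |t^{c}f(t)|^{p}\,\frac{dt}{t}\right)^{1/p}<\infty$. For $\alpha>0$, $\beta,\eta,\kappa\in\mathbb{R}$, $\rho>0$, $0\le a<x$, and a function $\varphi$, the generalized (Katugampola) fractional integral is $${}^{\rho}\mathcal{I}^{\alpha,\beta}_{a+,\eta,\kappa}\varphi(x)=\frac{\rho^{1-\beta}x^{\kappa}}{\Gamma(\alpha)}\int_{a}^{x}\frac{\tau^{\rho(\eta+1)-1}}{(x^{\rho}-\tau^{\rho})^{1-\alpha}}\varphi(\tau)\,d\tau,$$ whenever the integral exists. ${}^{\rho}\mathcal{I}^{\alpha,\beta}_{a+,\eta,\kappa}h^{p}(f,g)(x)$ denotes the operator applied to $\tau\mapsto h(f(\tau),g(\tau))^p$, evaluated at $x$. *)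

From HB Require Import structures.
From mathcomp Require Import all_boot all_order all_algebra.
From mathcomp Require Import all_classical all_reals all_analysis.
Set Implicit Arguments. Unset Strict Implicit. Unset Printing Implicit Defensive.
Import Order.TTheory GRing.Theory Num.Theory.
Import numFieldNormedType.Exports.
Local Open Scope classical_set_scope.
Local Open Scope ring_scope.

Definition Gamma {R : realType} (a : R) : R :=
  fine (\int[@lebesgue_measure R]_(t in `]0%R, +oo[)
          ((t `^ (a - 1)) * expR (- t))%:E)%E.

Definition Xpc {R : realType} (c p a b : R) (f : R -> R) : Prop :=
  measurable_fun `]a, b[ f /\
  (\int[@lebesgue_measure R]_(t in `]a, b[)
      ((`| t `^ c * f t | `^ p) / t)%:E < +oo)%E.

(* Katugampola generalized fractional integral
   ^rho I^{alpha,beta}_{a+,eta,kappa} phi (x), as an extended real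
   (the integral of a nonnegative integrand may be +oo). *)
Definition katI {R : realType} (rho alpha beta eta kappa a : R)
    (phi : R -> R) (x : R) : \bar R :=
  ((rho `^ (1 - beta) * x `^ kappa / Gamma alpha)%:E *
   \int[@lebesgue_measure R]_(tau in `]a, x[)
      (tau `^ (rho * (eta + 1) - 1) * (x `^ rho - tau `^ rho) `^ (alpha - 1)
        * phi tau)%:E)%E.

Definition hfun {R : realType} (m M u v : R) : R :=
  Num.max (M * ((M / m + 1) * u - M * v)) (((m + M) * v - u) / m).

(* Pointwise, 0 < f, g and m <= f/g <= M force h(f, g) >= f and h(f, g) >= g:
   the second branch of the max is >= g exactly when f <= M g, and the first is
   >= f when M >= 1 (while f <= M g <= g when M <= 1).  The fractional integral
   has a nonnegative kernel, so it is monotone on nonnegative integrands; hence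
   each of I(f^p)^(1/p) and I(g^p)^(1/p) is at most I(h^p)^(1/p). *)
From HB Require Import structures.
From mathcomp Require Import all_boot all_order all_algebra.
From mathcomp Require Import all_classical all_reals all_analysis.
From mathcomp Require Import lra.
Set Implicit Arguments. Unset Strict Implicit. Unset Printing Implicit Defensive.
Import Order.TTheory GRing.Theory Num.Theory.
Import numFieldNormedType.Exports.
Local Open Scope classical_set_scope.
Local Open Scope ring_scope.

(* No measurability is needed: the nonnegative integral is the supremum of the
   integrals of the simple functions below the integrand. *)
Lemma ge0_le_integral_nomeas d (T : measurableType d) (R : realType)
    (mu : {measure set T -> \bar R}) (D : set T) (f1 f2 : T -> \bar R) :
  (forall t, D t -> (0 <= f1 t)%E) -> (forall t, D t -> (f1 t <= f2 t)%E) ->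
  (\int[mu]_(t in D) f1 t <= \int[mu]_(t in D) f2 t)%E.
Proof.
move=> f10 f12.
have f20 t : D t -> (0 <= f2 t)%E by move=> Dt; exact: le_trans (f10 t Dt) (f12 t Dt).
rewrite !ge0_integralE//; apply: ereal_sup_le => _ [h /= hf1 <-].
exists h => //= t; apply: le_trans (hf1 t) _.
by rewrite /patch; case: ifP => // /[1!inE]; exact: f12.
Qed.

Lemma Gamma_ge0 (R : realType) (s : R) : 0 <= Gamma s.
Proof.
apply/fine_ge0/integral_ge0 => t _.
by rewrite lee_fin mulr_ge0 ?powR_ge0 ?expR_ge0.
Qed.

Section Katugampola.
Variables (R : realType) (rho alpha beta eta kappa a x : R).

Let I := katI rho alpha beta eta kappa a.

Let coef_ge0 : 0 <= rho `^ (1 - beta) * x `^ kappa / Gamma alpha.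
Proof. by rewrite divr_ge0 ?mulr_ge0 ?powR_ge0 ?Gamma_ge0. Qed.

Lemma katI_ge0 (F : R -> R) :
  (forall t, a < t < x -> 0 <= F t) -> (0 <= I F x)%E.
Proof.
move=> F0; apply: mule_ge0; first by rewrite lee_fin.
apply: integral_ge0 => t /=; rewrite in_itv /= => /F0 Ft.
by rewrite lee_fin !mulr_ge0 ?powR_ge0.
Qed.

Lemma le_katI (F G : R -> R) :
  (forall t, a < t < x -> 0 <= F t <= G t) -> (I F x <= I G x)%E.
Proof.
move=> FG; apply: lee_wpmul2l; first by rewrite lee_fin.
apply: ge0_le_integral_nomeas => t /=; rewrite in_itv /= => /FG /andP[F0 FG_t].
  by rewrite lee_fin !mulr_ge0 ?powR_ge0.
by rewrite lee_fin ler_wpM2l ?mulr_ge0 ?powR_ge0.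
Qed.

End Katugampola.

Lemma hfun_ge (R : realType) (m M u v : R) :
  0 < m -> 0 < M -> 0 < v -> m <= u / v <= M ->
  u <= hfun m M u v /\ v <= hfun m M u v.
Proof.
move=> m0 M0 v0 /andP[]; rewrite ler_pdivlMr // ler_pdivrMr // => mv_u u_Mv.
have v_le : v <= ((m + M) * v - u) / m by rewrite ler_pdivlMr //; lra.
rewrite /hfun !le_max v_le orbT; split => //.
have [M_le1|M_gt1] := leP M 1; first by rewrite (le_trans _ v_le) ?orbT //; nra.
apply/orP; left.
have u0 : 0 < u := lt_le_trans (mulr_gt0 m0 v0) mv_u.
have Mu : u <= M * u by rewrite ler_peMl ?ltW.
have qm : M / m * m = M by rewrite divfK // gt_eqF.
have q0 : 0 <= M / m by rewrite divr_ge0 ?ltW.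
set q := M / m in qm q0 *.
have E : M * q * (m * v) = M * M * v by rewrite mulrA -(mulrA M q m) qm.
have : 0 <= M * q * (u - m * v) by rewrite mulr_ge0 ?subr_ge0 ?(mulr_ge0 (ltW M0) q0).
rewrite mulrBr E; lra.
Qed.

Lemma poweR_add_le_double (R : realType) (A B C : \bar R) (r : R) :
  0 <= r -> (0 <= A <= C)%E -> (0 <= B <= C)%E ->
  (A `^ r + B `^ r <= 2%:E * C `^ r)%E.
Proof.
move=> r0 /andP[A0 AC] /andP[B0 BC].
have C0 : (0 <= C)%E by exact: le_trans AC.
have inI (y : \bar R) : (0 <= y)%E -> y \in `[0%E, +oo]%E by move=> y0; rewrite in_itv /= y0 leey.
rewrite -[2%R]/(1 + 1)%R EFinD ge0_muleDl ?poweR_ge0 // mul1e.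
by apply: leeD; apply: gt0_ler_poweR; rewrite ?inI.
Qed.

Theorem theorem15 (R : realType) (alpha beta eta kappa rho p a x c m M : R)
    (f g : R -> R) :
  0 < alpha -> 0 < rho -> 1 <= p -> 0 <= a -> a < x ->
  (forall t, 0 <= t -> 0 < f t) -> (forall t, 0 <= t -> 0 < g t) ->
  Xpc c p a x f -> Xpc c p a x g ->
  (katI rho alpha beta eta kappa a (fun t => (f t `^ p)%R) x < +oo)%E ->
  (katI rho alpha beta eta kappa a (fun t => (g t `^ p)%R) x < +oo)%E ->
  0 < m -> 0 < M ->
  (forall t, a <= t <= x -> m <= f t / g t <= M) ->
  (katI rho alpha beta eta kappa a (fun t => (f t `^ p)%R) x `^ p^-1%R
   + katI rho alpha beta eta kappa a (fun t => (g t `^ p)%R) x `^ p^-1%R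
   <= 2%:E * katI rho alpha beta eta kappa a
               (fun t => (hfun m M (f t) (g t) `^ p)%R) x `^ p^-1%R)%E.
Proof.
move=> _ _ p1 a0 _ f0 g0 _ _ _ _ m0 M0 fg.
have p0 : 0 <= p by lra.
have powR_le_hfun t : a < t < x ->
    (0 <= f t `^ p <= hfun m M (f t) (g t) `^ p) /\
    (0 <= g t `^ p <= hfun m M (f t) (g t) `^ p).
  move=> /andP[a_t t_x]; have t0 : 0 <= t by lra.
  have t_in : a <= t <= x by rewrite !ltW.
  have [fh gh] := hfun_ge m0 M0 (g0 t t0) (fg t t_in).
  have le_powR u : 0 < u -> u <= hfun m M (f t) (g t) ->
      0 <= u `^ p <= hfun m M (f t) (g t) `^ p.
    move=> u0 uh; have h0 := le_trans (ltW u0) uh.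
    by rewrite powR_ge0 ge0_ler_powR ?nnegrE ?(ltW u0).
  by split; apply: le_powR => //; [exact: f0 | exact: g0].
apply: poweR_add_le_double; first by rewrite invr_ge0.
- apply/andP; split; first by apply: katI_ge0 => t /powR_le_hfun[/andP[]].
  by apply: le_katI => t /powR_le_hfun[].
- apply/andP; split; first by apply: katI_ge0 => t /powR_le_hfun[_ /andP[]].
  by apply: le_katI => t /powR_le_hfun[].
Qed.
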